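(* For every prime power $q$ and every $G\in\mathfrak{g}_3(\mathbb{F}_q)$, the nonlooped vertices of $G$ are pairwise adjacent (they form a clique).
   Context: For a symmetric $n\times n$ matrix $A$, the looped graph corresponding to $A$, $\Gamma(A)$, has vertex set $\{1,\dots,n\}$, an edge $ij$ ($i\neq j$) iff $a_{ij}\neq0$, and a loop at $i$ iff $a_{ii}\ne 0$. Definition of $\mathfrak{g}_k(\mathbb{F}_q)$: let $x_1,\dots,x_m$ be representatives of the classes of nonzero vectors of $\mathbb{F}_q^k$ under the relation $x\sim cx$ ($c\in\mathbb{F}_q$, $c\neq0$), and let $U=[x_1\ \cdots\ x_m]$; $\mathfrak{g}_k(\mathbb{F}_q)$ is the set of isomorphism classes of looped graphs $\Gamma(U^tBU)$ as $B$ ranges over the invertible symmetric $k\times k$ matrices over $\mathbb{F}_q$. *)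

From HB Require Import structures.
From mathcomp Require Import all_boot all_order all_algebra.
Set Implicit Arguments. Unset Strict Implicit. Unset Printing Implicit Defensive.
Import GRing.Theory.
Local Open Scope ring_scope.

(* A looped graph on vertex set 'I_n: an adjacency relation (on distinct
   vertices) and a loop predicate. *)
Record looped_graph := LoopedGraph {
  lg_n : nat;
  lg_adj : rel 'I_lg_n;
  lg_loop : pred 'I_lg_n }.

Definition Gamma (F : fieldType) (n : nat) (A : 'M[F]_n) : looped_graph :=
  @LoopedGraph n (fun i j => (i != j) && (A i j != 0)) (fun i => A i i != 0).

Definition lg_iso (G H : looped_graph) : Prop :=
  exists f : 'I_(lg_n G) -> 'I_(lg_n H),
    [/\ bijective f,
        forall i j, @lg_adj H (f i) (f j) = @lg_adj G i j &
        forall i, @lg_loop H (f i) = @lg_loop G i].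

(* The columns of U : 'M_(k,m) form a system of representatives of the
   nonzero vectors of F^k modulo nonzero scalars. *)
Definition proj_reps (F : fieldType) (k m : nat) (U : 'M[F]_(k, m)) : Prop :=
  [/\ forall i, col i U != 0,
      forall i j, i != j -> forall c : F, col i U != c *: col j U &
      forall x : 'cV[F]_k, x != 0 -> exists i, exists2 c : F, c != 0 & x = c *: col i U].

(* G belongs to g_k(F) (the set of isomorphism classes is represented by
   the predicate "isomorphic to some Gamma(U^t B U)"), for the given U. *)
Definition in_gk (F : fieldType) (k m : nat) (U : 'M[F]_(k, m)) (G : looped_graph) : Prop :=
  exists B : 'M[F]_k, [/\ B^T = B, B \in unitmx & lg_iso G (Gamma (U^T *m B *m U))].

From HB Require Import structures.
From mathcomp Require Import all_boot all_order all_algebra.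
Set Implicit Arguments. Unset Strict Implicit. Unset Printing Implicit Defensive.
Import GRing.Theory.
Local Open Scope ring_scope.

(* Write <x, y> := x^T B y for the bilinear form of B.  The
   (a, b) entry of U^T B U is <u_a, u_b>, where u_a is the a-th column of U,
   so a vertex a is nonlooped iff u_a is isotropic, and two distinct vertices
   a, b are nonadjacent iff <u_a, u_b> = 0.  If two distinct nonlooped
   vertices were nonadjacent, u_a and u_b would span a totally isotropic
   subspace (using symmetry of B for <u_b, u_a> = 0); it has dimension 2
   because the columns of U are pairwise projectively distinct.
   But a totally isotropic subspace of a nondegenerate form on F^n has
   dimension at most n/2 (Sylvester's rank inequality applied to
   X B X^T = 0), and 2 > 3/2.  The file proves, in this order: the entry
   formula for U^T B U, the rank bound for totally isotropic subspaces, the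
   linear independence of two projectively distinct vectors, the Gram matrix
   of such a pair, and finally the theorem. *)

Definition bform (F : fieldType) (n : nat) (B : 'M[F]_n) (x y : 'cV[F]_n) : F :=
  (x^T *m B *m y) 0 0.

Lemma congruence_entry (F : fieldType) (k m : nat) (U : 'M[F]_(k, m))
    (B : 'M[F]_k) (a b : 'I_m) :
  (U^T *m B *m U) a b = bform B (col a U) (col b U).
Proof.
rewrite /bform !mxE; apply: eq_bigr => i _; rewrite !mxE; congr (_ * _).
by apply: eq_bigr => j _; rewrite !mxE.
Qed.

Lemma bformC (F : fieldType) (n : nat) (B : 'M[F]_n) (x y : 'cV[F]_n) :
  B^T = B -> bform B x y = bform B y x.
Proof.
move=> BT; have tr_form : (x^T *m B *m y)^T = y^T *m B *m x.
  by rewrite !trmx_mul trmxK BT mulmxA.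
by rewrite /bform -tr_form [RHS]mxE.
Qed.

Lemma isotropic_rank_bound (F : fieldType) (r n : nat) (B : 'M[F]_n)
    (X : 'M[F]_(r, n)) :
  B \in unitmx -> X *m B *m X^T = 0 -> ((\rank X).*2 <= n)%N.
Proof.
move=> Bu /mulmx0_rank_max.
by rewrite mxrankMfree ?row_free_unit // mxrank_tr addnn.
Qed.

Lemma pair_row_free (F : fieldType) (n : nat) (x y : 'cV[F]_n) :
  x != 0 -> (forall c, y != c *: x) -> row_free (col_mx x^T y^T).
Proof.
move=> x0 yx; apply: inj_row_free => v.
rewrite -[v]hsubmxK mul_row_col.
rewrite [lsubmx v]mx11_scalar [rsubmx v]mx11_scalar !mul_scalar_mx.
set c0 := lsubmx v 0 0; set c1 := rsubmx v 0 0 => h.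
have rel0 : c0 *: x + c1 *: y = 0.
  by have := congr1 trmx h; rewrite linearD !linearZ /= !trmxK trmx0.
have c1_0 : c1 = 0.
  apply/eqP/negPn/negP => c1n0; apply: (negP (yx (- (c0 / c1)))); apply/eqP.
  have : c1 *: y = - (c0 *: x) by apply/eqP; rewrite -addr_eq0 addrC rel0.
  move/(congr1 (fun z => c1^-1 *: z)); rewrite scalerA mulVf // scale1r => ->.
  by rewrite scalerN scalerA mulrC scaleNr.
have c0_0 : c0 = 0.
  move/eqP: rel0; rewrite c1_0 scale0r addr0 scaler_eq0 (negbTE x0) orbF.
  by move/eqP.
by rewrite c0_0 c1_0 !raddf0 row_mx0.
Qed.

Lemma mx11_eq0 (F : fieldType) (A : 'M[F]_1) : A 0 0 = 0 -> A = 0.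
Proof. by move=> h; apply/matrixP=> i j; rewrite !ord1 mxE h. Qed.

Lemma isotropic_pair (F : fieldType) (n : nat) (B : 'M[F]_n) (x y : 'cV[F]_n) :
  bform B x x = 0 -> bform B x y = 0 -> bform B y x = 0 -> bform B y y = 0 ->
  let X := col_mx x^T y^T in X *m B *m X^T = 0.
Proof.
move=> /mx11_eq0 hxx /mx11_eq0 hxy /mx11_eq0 hyx /mx11_eq0 hyy X.
rewrite /X tr_col_mx !trmxK mul_mx_row !mul_col_mx.
by rewrite hxx hxy hyx hyy !col_mx0 row_mx0.
Qed.

Theorem mainTheorem16 (F : finFieldType) (m : nat) (U : 'M[F]_(3, m))
  (hU : proj_reps U) (G : looped_graph) (hG : in_gk U G) :
  forall u v : 'I_(lg_n G), u != v -> ~~ @lg_loop G u -> ~~ @lg_loop G v ->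
    @lg_adj G u v.
Proof.
move=> u v uv lu lv.
case: hU => col_nz col_distinct _.
case: hG => B [BT Bu [f [/bij_inj f_inj f_adj f_loop]]].
rewrite -f_loop /= negbK congruence_entry in lu.
rewrite -f_loop /= negbK congruence_entry in lv.
have fuv : f u != f v by apply: contra uv => /eqP /f_inj ->.
rewrite -f_adj /= fuv /= congruence_entry; apply/negP => /eqP huv.
set x := col (f u) U in lu huv; set y := col (f v) U in lv huv.
have hvu : bform B y x = 0 by rewrite bformC.
have indep : row_free (col_mx x^T y^T).
  by apply: pair_row_free => [|c]; [exact: col_nz | rewrite col_distinct // eq_sym].
have := isotropic_rank_bound Bu
  (isotropic_pair (eqP lu) huv hvu (eqP lv)).
by rewrite (eqP indep).
Qed.
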